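(* Let $P,Q$ be plane posets with the same number $n$ of elements, and let $\theta_{P,Q}:P\to Q$ be the unique bijection which is increasing for the total orders $\leq$ of $P$ and $Q$. The following assertions are equivalent: (1) for all $x,y\in P$, if $\theta_{P,Q}(x)\leq_h\theta_{P,Q}(y)$ in $Q$ then $x\leq_h y$ in $P$; (2) for all $x,y\in P$, if $x\leq_r y$ in $P$ then $\theta_{P,Q}(x)\leq_r\theta_{P,Q}(y)$ in $Q$.
   Context: A plane poset is a finite set $P$ with two partial orders $\leq_h$ and $\leq_r$ such that for all $x\neq y$ in $P$, $x$ and $y$ are comparable for $\leq_h$ if and only if they are not comparable for $\leq_r$. It is known that on any plane poset the relation $x\leq y$ iff ($x\leq_h y$ or $x\leq_r y$) is a total order. *)

From mathcomp Require Import all_boot.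
Set Implicit Arguments. Unset Strict Implicit. Unset Printing Implicit Defensive.

Definition partial_order (T : Type) (le : rel T) : Prop :=
  [/\ reflexive le, antisymmetric le & transitive le].

Definition plane_poset (T : finType) (leh ler : rel T) : Prop :=
  [/\ partial_order leh, partial_order ler &
      forall x y : T, x != y ->
        ((leh x y || leh y x) <-> ~~ (ler x y || ler y x))].

Definition plane_total (T : Type) (leh ler : rel T) : rel T :=
  fun x y => leh x y || ler x y.

From mathcomp Require Import all_boot.

Set Implicit Arguments.
Unset Strict Implicit.
Unset Printing Implicit Defensive.

(* In a plane poset two distinct elements are comparable for exactly one of
   the two orders, and the total order is their union.  So when theta is
   injective and increasing for the total orders, any pair compared by one
   order on one side and by the other order on the other side collapses to a
   single element; each implication is a case analysis on which order compares
   the pair. *)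

Section PlanePoset.

Variables (T : finType) (leh ler : rel T).
Hypothesis plane : plane_poset leh ler.

Lemma plane_comparable_eq x y :
  leh x y || leh y x -> ler x y || ler y x -> x = y.
Proof.
case: plane => _ _ hr_excl hxy rxy; apply/eqP; apply: contraLR rxy => neq_xy.
exact: (proj1 (hr_excl x y neq_xy) hxy).
Qed.

Lemma plane_rincomparable_hcomparable x y :
  ~~ (ler x y || ler y x) -> leh x y || leh y x.
Proof.
case: plane => -[leh_refl _ _] _ hr_excl.
case: (eqVneq x y) => [-> _ | neq_xy]; first by rewrite leh_refl.
exact: (proj2 (hr_excl x y neq_xy)).
Qed.

Lemma plane_hle_total_eq x y : leh x y -> plane_total leh ler y x -> x = y.
Proof.
case: plane => -[_ leh_anti _] _ _ hxy /orP[hyx | ryx].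
  by apply: leh_anti; rewrite hxy hyx.
by apply: plane_comparable_eq; rewrite ?hxy ?ryx ?orbT.
Qed.

End PlanePoset.

Section IncreasingInjection.

Variables (T U : finType) (lehP lerP : rel T) (lehQ lerQ : rel U).
Hypotheses (planeP : plane_poset lehP lerP) (planeQ : plane_poset lehQ lerQ).
Variable theta : T -> U.
Hypothesis theta_inj : injective theta.
Hypothesis theta_total :
  {homo theta : x y / plane_total lehP lerP x y >-> plane_total lehQ lerQ x y}.

Lemma hle_reflect_rle_preserve :
  (forall x y, lehQ (theta x) (theta y) -> lehP x y) ->
  forall x y, lerP x y -> lerQ (theta x) (theta y).
Proof.
move=> hreflect x y rxy.
have /orP[hxy | //] : plane_total lehQ lerQ (theta x) (theta y).
  by apply: theta_total; rewrite /plane_total rxy orbT.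
have -> : x = y.
  by apply: (plane_comparable_eq planeP); rewrite ?(hreflect _ _ hxy) ?rxy.
by case: planeQ => _ [lerQ_refl _ _] _; apply: lerQ_refl.
Qed.

Lemma rle_preserve_hle_reflect :
  (forall x y, lerP x y -> lerQ (theta x) (theta y)) ->
  forall x y, lehQ (theta x) (theta y) -> lehP x y.
Proof.
move=> rpreserve x y hxy.
have theta_eq_refl : theta x = theta y -> lehP x y.
  by move/theta_inj ->; case: planeP => -[lehP_refl _ _] _ _; apply: lehP_refl.
have [/orP[rxy | ryx] | r_incomp] := boolP (lerP x y || lerP y x).
- apply/theta_eq_refl/(plane_comparable_eq planeQ);
    by rewrite ?hxy ?(rpreserve _ _ rxy).
- apply/theta_eq_refl/(plane_comparable_eq planeQ);
    by rewrite ?hxy ?(rpreserve _ _ ryx) ?orbT.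
have /orP[// | hyx] := plane_rincomparable_hcomparable planeP r_incomp.
apply/theta_eq_refl/(plane_hle_total_eq planeQ hxy)/theta_total.
by rewrite /plane_total hyx.
Qed.

End IncreasingInjection.

Theorem lemma9 (T U : finType) (lehP lerP : rel T) (lehQ lerQ : rel U)
  (HP : plane_poset lehP lerP) (HQ : plane_poset lehQ lerQ)
  (Hcard : #|T| = #|U|)
  (theta : T -> U) (Hbij : bijective theta)
  (Hincr : {homo theta : x y / plane_total lehP lerP x y >-> plane_total lehQ lerQ x y}) :
  (forall x y : T, lehQ (theta x) (theta y) -> lehP x y) <->
  (forall x y : T, lerP x y -> lerQ (theta x) (theta y)).
Proof.
split=> H.
- exact: (hle_reflect_rle_preserve HP HQ Hincr H).
- exact: (rle_preserve_hle_reflect HP HQ (bij_inj Hbij) Hincr H).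
Qed.
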